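(* Let $\mathscr H$ be a real Hilbert space, $\mathscr A\subseteq\mathscr H$ a closed linear subspace, $\mathsf Z$ a countable index set, $(h_k)_{k\in\mathsf Z}$ an orthogonal family of nonzero vectors with $P_{\mathscr A}h_k\neq 0$ for all $k$, and $\mathbf s=(\mathrm s_k)$ a real sequence with $(\mathrm s_k/\|h_k\|)_k\in\ell^2(\mathsf Z)$. For $k\in\mathsf Z$ let $P_k$ be the orthogonal projection onto $\mathscr S_k:=\{v\in\mathscr A:\langle v,h_k\rangle=\mathrm s_k\}$, and set $\mu_k:=\|P_{\mathscr A}h_k\|^2/\|h_k\|^2$. Then $\mu_k\in(0,1]$ for every $k$, and for every $u\in\mathscr A$, $$P_{\mathscr A}P_{\mathscr C_{\mathbf s}}u=u+\sum_{k\in\mathsf Z}\mu_k\,(P_k u-u),$$ where $\mathscr C_{\mathbf s}:=\{v\in\mathscr H:\langle v,h_k\rangle=\mathrm s_k\ \forall k\in\mathsf Z\}$.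
   Context: $P_{\mathscr V}$ denotes orthogonal projection (nearest-point map) onto a nonempty closed affine subspace $\mathscr V$ of $\mathscr H$. *)

From HB Require Import structures.
From mathcomp Require Import all_boot all_order all_algebra.
From mathcomp Require Import all_classical all_reals all_analysis.
Set Implicit Arguments. Unset Strict Implicit. Unset Printing Implicit Defensive.
Import Order.TTheory GRing.Theory Num.Theory.
Import numFieldNormedType.Exports.
Local Open Scope classical_set_scope.
Local Open Scope ring_scope.

(* A real Hilbert space is modelled as a complete normed R-module H together
   with a symmetric bilinear form [ip] that induces the norm:
   ip x x = `|x|^2.  (Positive definiteness follows from the norm axioms.) *)
Definition is_inner_product (R : realType) (H : normedModType R)
  (ip : H -> H -> R) : Prop :=
  [/\ (forall x y, ip x y = ip y x),
      (forall a x y z, ip (a *: x + y) z = a * ip x z + ip y z)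
    & (forall x, ip x x = `|x| ^+ 2)].

Definition closed_subspace (R : realType) (H : normedModType R) (A : set H) :=
  [/\ A 0, (forall x y, A x -> A y -> A (x + y)),
      (forall (a : R) x, A x -> A (a *: x)) & closed A].

Definition is_nearest (R : realType) (H : normedModType R) (C : set H) (x p : H) :=
  C p /\ (forall y, C y -> `|x - p| <= `|x - y|).

(* P_C : nearest-point map (well defined and unique for nonempty closed
   affine subspaces of a Hilbert space); chosen with xget. *)
Definition nearest_proj (R : realType) (H : normedModType R) (C : set H) (x : H) : H :=
  xget 0 (is_nearest C x).

(* unconditional convergence of \sum_{k in Z} f k to l (net of finite subsets) *)
Definition has_usum (R : realType) (H : normedModType R) (Z : eqType)
  (f : Z -> H) (l : H) : Prop :=
  forall e : R, 0 < e -> exists s0 : seq Z, forall s : seq Z,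
    uniq s -> {subset s0 <= s} -> `|\sum_(k <- s) f k - l| < e.

From HB Require Import structures.
From mathcomp Require Import all_boot all_order all_algebra.
From mathcomp Require Import all_classical all_reals all_analysis.
From mathcomp Require Import ring lra.
Import Order.TTheory GRing.Theory Num.Theory.
Import numFieldNormedType.Exports.
Local Open Scope classical_set_scope.
Local Open Scope ring_scope.

Set Implicit Arguments. Unset Strict Implicit. Unset Printing Implicit Defensive.

(* Notation: [h k] is an orthogonal family of nonzero vectors, [A] a closed
   subspace, [a k = P_A (h k)], and [c k = <u, h k> - s k] the defect of [u]
   on the k-th constraint.  The proof is explicit: every projection in the
   statement is computed in closed form and identified through the
   orthogonality characterization of nearest points ([proj_eq]).
   - [P_Cs u = u - Sum_k (c k / |h k|^2) h k]: the corrections along the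
     orthogonal [h k] are summable by Bessel's inequality and the l^2 bound
     on [s k / |h k|] ([ucauchy_residual], [proj_constraints]).
   - [P_A] maps that sum termwise to [Sum_k (c k / |h k|^2) a k], since each
     [h k - a k] is orthogonal to [A] ([proj_usum_subspace]).
   - [P_k u = u - (c k / |a k|^2) a k] for [u] in [A] ([proj_hyperplane]),
     so [mu k (P_k u - u) = -(c k / |h k|^2) a k], and [mu k] lies in (0,1]
     by Pythagoras ([proj_ratio_range]).
   Only the projections [a k] need to exist a priori; the hypothesis
   [P_A (h k) != 0] certifies this ([nearest_projP]).
   Unconditional sums over a countable index set are developed first: their
   uniqueness, continuity of the inner product, closedness of subspaces, and
   existence in complete spaces from a Cauchy criterion on finite tails. *)

Section InnerProduct.
Variables (R : realType) (H : normedModType R) (ip : H -> H -> R).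
Hypothesis Hip : is_inner_product ip.

Lemma ipC x y : ip x y = ip y x. Proof. by case: Hip. Qed.
Lemma ipxx x : ip x x = `|x| ^+ 2. Proof. by case: Hip. Qed.
Lemma ipL a x y z : ip (a *: x + y) z = a * ip x z + ip y z. Proof. by case: Hip. Qed.

Lemma ip0l z : ip 0 z = 0.
Proof. by have := ipL 1 0 0 z; rewrite scaler0 addr0 mul1r => e; lra. Qed.
Lemma ipDl x y z : ip (x + y) z = ip x z + ip y z.
Proof. by rewrite -[x]scale1r ipL mul1r scale1r. Qed.
Lemma ipZl a x z : ip (a *: x) z = a * ip x z.
Proof. by rewrite -[a *: x]addr0 ipL ip0l addr0. Qed.
Lemma ipBl x y z : ip (x - y) z = ip x z - ip y z.
Proof. by rewrite addrC -scaleN1r ipL mulN1r addrC. Qed.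
Lemma ip0r z : ip z 0 = 0. Proof. by rewrite ipC ip0l. Qed.
Lemma ipZr a x z : ip z (a *: x) = a * ip z x.
Proof. by rewrite ipC ipZl ipC. Qed.
Lemma ipBr x y z : ip z (x - y) = ip z x - ip z y.
Proof. by rewrite ipC ipBl !(ipC z). Qed.

Lemma ip_suml (I : Type) (t : seq I) (f : I -> H) z :
  ip (\sum_(k <- t) f k) z = \sum_(k <- t) ip (f k) z.
Proof.
elim: t => [|a t IH]; first by rewrite !big_nil ip0l.
by rewrite !big_cons ipDl IH.
Qed.
Lemma ip_sumr (I : Type) (t : seq I) (f : I -> H) z :
  ip z (\sum_(k <- t) f k) = \sum_(k <- t) ip z (f k).
Proof. by rewrite ipC ip_suml; apply: eq_bigr => k _; rewrite ipC. Qed.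

Lemma normD2 x y : `|x + y| ^+ 2 = `|x| ^+ 2 + 2 * ip x y + `|y| ^+ 2.
Proof. by rewrite -!ipxx ipDl ![ip _ (x + y)]ipC !ipDl (ipC y x); ring. Qed.
Lemma normB2 x y : `|x - y| ^+ 2 = `|x| ^+ 2 - 2 * ip x y + `|y| ^+ 2.
Proof. by rewrite -!ipxx ipBl !ipBr (ipC y x); ring. Qed.

(* Cauchy-Schwarz, from the nonnegativity of `||y|^2 x - <x,y> y|^2`;
   it makes the inner product continuous for unconditional sums. *)
Lemma cauchy_schwarz x y : `|ip x y| <= `|x| * `|y|.
Proof.
have [->|y0] := eqVneq y 0; first by rewrite ip0r !normr0 mulr0.
have Y0 : 0 < `|y| by rewrite normr_gt0.
have := sqr_ge0 `|(`|y| ^+ 2) *: x - ip x y *: y|.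
rewrite -[X in 0 <= X]ipxx ipBl !ipBr !ipZl !ipZr !ipxx (ipC y x) => q.
have X0 := normr_ge0 x; have Y2 := exprn_gt0 2 Y0.
have q2 : ip x y ^+ 2 <= (`|x| * `|y|) ^+ 2 by nra.
by rewrite -ler_sqr ?nnegrE ?mulr_ge0 // real_normK ?num_real.
Qed.

Lemma pythagoras x p y : ip (x - p) (y - p) = 0 ->
  `|x - y| ^+ 2 = `|x - p| ^+ 2 + `|y - p| ^+ 2.
Proof.
move=> o; have -> : x - y = (x - p) - (y - p) by rewrite opprB addrA subrK.
by rewrite normB2 o mulr0 subr0.
Qed.

Lemma norm_orth_sum (Z : eqType) (g : Z -> H) (t : seq Z) : uniq t ->
  (forall j k, j != k -> ip (g j) (g k) = 0) ->
  `|\sum_(k <- t) g k| ^+ 2 = \sum_(k <- t) `|g k| ^+ 2.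
Proof.
move=> ut og; elim: t ut => [|a t IH]; first by rewrite !big_nil normr0 expr0n.
move=> /= /andP[aNt ut]; rewrite !big_cons normD2 IH // ip_sumr.
rewrite big1_seq ?mulr0 ?addr0 // => k /= kt; apply: og.
by apply: contraNneq aNt => ->.
Qed.

End InnerProduct.

Section ClosedSubspaces.
Variables (R : realType) (V : normedModType R) (A : set V).
Hypothesis HA : closed_subspace A.

Lemma subspaceZ (a : R) x : A x -> A (a *: x).
Proof. by case: HA => _ _ AZ _; apply: AZ. Qed.

Lemma subspaceB x y : A x -> A y -> A (x - y).
Proof. by case: HA => _ AD _ _ Ax Ay; rewrite -scaleN1r; apply: AD => //; apply: subspaceZ. Qed.

Lemma subspace_sum (I : Type) (t : seq I) (f : I -> V) :
  (forall k, A (f k)) -> A (\sum_(k <- t) f k).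
Proof.
case: HA => A0 AD _ _ Af.
by elim: t => [|k t IH]; rewrite ?big_nil ?big_cons //; apply: AD.
Qed.

End ClosedSubspaces.

Section UnconditionalSums.
Variables (R : realType) (V : normedModType R) (Z : eqType).
Implicit Types (f g : Z -> V) (l : V).

Lemma usum_uniq f l1 l2 : has_usum f l1 -> has_usum f l2 -> l1 = l2.
Proof.
move=> h1 h2; apply/eqP; rewrite -subr_eq0 -normr_le0; apply/negPn/negP.
rewrite -ltNge => d0; have e0 : 0 < `|l1 - l2| / 2 by rewrite divr_gt0.
have [s1 H1] := h1 _ e0; have [s2 H2] := h2 _ e0.
pose s := undup (s1 ++ s2).
have a1 : `|\sum_(k <- s) f k - l1| < `|l1 - l2| / 2.
  by apply: H1; [exact: undup_uniq | move=> x xs; rewrite mem_undup mem_cat xs].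
have a2 : `|\sum_(k <- s) f k - l2| < `|l1 - l2| / 2.
  by apply: H2; [exact: undup_uniq | move=> x xs; rewrite mem_undup mem_cat xs orbT].
have := ler_distD (\sum_(k <- s) f k) l1 l2; rewrite (distrC l1 (\sum_(k <- s) f k)); lra.
Qed.

Lemma usum_ext f g l : (forall k, f k = g k) -> has_usum f l -> has_usum g l.
Proof. by move=> /funext ->. Qed.

Lemma usum0 : has_usum (fun _ : Z => (0 : V)) 0.
Proof. by move=> e e0; exists [::] => s _ _; rewrite big1 // subrr normr0. Qed.

Lemma usum_delta (j : Z) (v : V) : has_usum (fun k => if k == j then v else 0) v.
Proof.
move=> e e0; exists [:: j] => s us sub.
rewrite -big_mkcond /= big_const_seq.
have -> : count (fun k => k == j) s = 1%N.
  by have := count_uniq_mem j us; rewrite sub ?mem_head //= => <-; apply: eq_count.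
by rewrite /= addr0 subrr normr0.
Qed.

Lemma usum_scale f l (a : R) : has_usum f l -> has_usum (fun k => a *: f k) (a *: l).
Proof.
move=> h e e0; have e1 : 0 < e / (`|a| + 1) by rewrite divr_gt0 // ltr_wpDl.
have [s0 H0] := h _ e1; exists s0 => s us sub.
rewrite -scaler_sumr -scalerBr normrZ.
have := H0 s us sub; rewrite ltr_pdivlMr ?ltr_wpDl // => hs.
by apply: le_lt_trans _ hs; rewrite mulrC ler_wpM2l ?lerDl.
Qed.

Lemma usum_closed (A : set V) f l : closed_subspace A -> (forall k, A (f k)) ->
  has_usum f l -> A l.
Proof.
move=> HA Af h; case: (HA) => _ _ _ cA; apply: cA => B /nbhs_ballP [e /= e0 eB].
have [s0 H0] := h _ e0; exists (\sum_(k <- undup s0) f k).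
split; first exact: subspace_sum.
apply: eB; rewrite -ball_normE /= distrC.
by apply: H0; [exact: undup_uniq | move=> x; rewrite mem_undup].
Qed.

Definition utail f (e : R) (s0 : seq Z) := forall t, uniq t ->
  (forall k, k \in t -> k \notin s0) -> `|\sum_(k <- t) f k| < e.
Definition ucauchy f := forall e : R, 0 < e -> exists s0, uniq s0 /\ utail f e s0.

Lemma utail_sub f e s0 s1 : {subset s0 <= s1} -> utail f e s0 -> utail f e s1.
Proof.
move=> sub ht t ut dt; apply: ht => // k /dt; exact: contra (sub k).
Qed.

Lemma utail_diff f e s0 s : utail f e s0 -> uniq s0 -> uniq s -> {subset s0 <= s} ->
  `|\sum_(k <- s) f k - \sum_(k <- s0) f k| < e.
Proof.
move=> ht u0 u sub.
have -> : \sum_(k <- s) f k =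
    \sum_(k <- s0) f k + \sum_(k <- [seq k <- s | k \notin s0]) f k.
  rewrite (bigID (mem s0)) /= big_filter; congr (_ + _).
  rewrite -big_filter; apply: perm_big; apply: uniq_perm => //; first exact: filter_uniq.
  by move=> x; rewrite mem_filter; case: (boolP (x \in s0)) => // /sub ->.
rewrite addrAC subrr add0r; apply: ht; first exact: filter_uniq.
by move=> k; rewrite mem_filter => /andP[].
Qed.

Lemma ucauchy_le f g :
  (forall t, uniq t -> `|\sum_(k <- t) g k| <= `|\sum_(k <- t) f k|) ->
  ucauchy f -> ucauchy g.
Proof.
move=> le hf e e0; have [s0 [u0 H0]] := hf e e0; exists s0; split => // t ut dt.
exact: le_lt_trans (le t ut) (H0 t ut dt).
Qed.

Lemma ucauchy_nested f : ucauchy f -> exists S : nat -> seq Z, forall n,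
  [/\ uniq (S n), utail f n.+1%:R^-1 (S n)
    & forall m, (n <= m)%N -> {subset S n <= S m}].
Proof.
move=> hc; have /choice [S0 HS0] : forall n : nat,
    exists s0, uniq s0 /\ utail f n.+1%:R^-1 s0.
  by move=> n; apply: hc; rewrite invr_gt0 ltr0Sn.
have sub n m : (n <= m)%N ->
    {subset S0 n <= undup (flatten [seq S0 i | i <- iota 0 m.+1])}.
  move=> nm x xs; rewrite mem_undup; apply/flatten_mapP; exists n => //.
  by rewrite mem_iota add0n ltnS nm.
exists (fun n => undup (flatten [seq S0 i | i <- iota 0 n.+1])) => n.
split; first exact: undup_uniq.
  by apply: utail_sub (sub n n (leqnn n)) (HS0 n).2.
move=> m nm x; rewrite !mem_undup => /flatten_mapP[i]; rewrite mem_iota => /andP[_ ilt].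
by move=> xi; rewrite -mem_undup; apply: sub xi; rewrite -ltnS (leq_trans ilt).
Qed.

End UnconditionalSums.

(* In a complete space every Cauchy-summable family is unconditionally
   summable: the partial sums along nested tail sets form a Cauchy sequence
   whose limit is the unconditional sum. *)
Lemma ucauchy_usum (R : realType) (V : completeNormedModType R) (Z : eqType)
  (f : Z -> V) : ucauchy f -> exists l, has_usum f l.
Proof.
move=> /ucauchy_nested [S HS].
pose x n := \sum_(k <- S n) f k.
have key n m : (n <= m)%N -> `|x m - x n| < n.+1%:R^-1.
  by move=> nm; have [u0 t0 sub] := HS n; have [um _ _] := HS m;
     exact: utail_diff t0 u0 um (sub m nm).
have [l xl] : exists l : V, x @ \oo --> l.
  suff cx : cvg (x @ \oo) by exists (lim (x @ \oo)).
  apply/cauchy_cvgP/cauchy_exP => e e0.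
  have [n] := ltr_add_invr e0; rewrite add0r => hn; exists (x n); exists n => //.
  by move=> m /= nm; rewrite -ball_normE /= distrC (lt_trans (key n m nm)).
exists l => e e0; have e4 : 0 < e / 4 by rewrite divr_gt0.
have [n] := ltr_add_invr e4; rewrite add0r => hn.
have [N _ HN] := (cvgrPdist_lt _ _).1 xl _ e4.
have [un tn _] := HS n; exists (S n) => s us sub.
have a1 : `|\sum_(k <- s) f k - x n| < n.+1%:R^-1 by exact: utail_diff tn un us sub.
have b1 := key n (maxn n N) (leq_maxl _ _).
have b2 : `|l - x (maxn n N)| < e / 4 by apply: HN; rewrite /= leq_maxr.
have t1 := ler_distD (x n) (\sum_(k <- s) f k) l.
have t2 := ler_distD (x (maxn n N)) (x n) l.
rewrite (distrC (x n) (x (maxn n N))) (distrC (x (maxn n N)) l) in t2.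
move: (x n) (x (maxn n N)) (n.+1%:R^-1) hn a1 b1 b2 t1 t2 => y z q; lra.
Qed.

(* The partial sums of a nonnegative family, if bounded, have a supremum
   that is almost attained; hence all finite sums outside a suitable finite
   index set are small. *)
Lemma tail_nonneg (R : realType) (Z : eqType) (phi : Z -> R) (M : R) :
  (forall k, 0 <= phi k) -> (forall t, uniq t -> \sum_(k <- t) phi k <= M) ->
  forall e, 0 < e -> exists s0, uniq s0 /\ forall t, uniq t ->
    (forall k, k \in t -> k \notin s0) -> \sum_(k <- t) phi k < e.
Proof.
move=> p0 bd e e0.
pose E := [set x | exists t, uniq t /\ x = \sum_(k <- t) phi k].
have hs : has_sup E.
  split; first by exists 0; exists [::]; rewrite big_nil.
  by exists M => _ [t [ut ->]]; exact: bd.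
have [_ [s0 [u0 ->]] hx] := sup_adherent e0 hs.
exists s0; split => // t ut dt.
have uc : uniq (s0 ++ t) by rewrite cat_uniq u0 ut andbT; apply/hasPn => k /dt.
have : \sum_(k <- s0 ++ t) phi k <= sup E.
  by apply: sup_upper_bound => //; exists (s0 ++ t).
by rewrite big_cat /=; lra.
Qed.

Lemma esum_bound (R : realType) (Z : choiceType) (phi : Z -> R) :
  (forall k, 0 <= phi k) -> (\esum_(k in [set: Z]) (phi k)%:E < +oo)%E ->
  exists M : R, forall t, uniq t -> \sum_(k <- t) phi k <= M.
Proof.
move=> p0 fin.
have ge t : uniq t -> ((\sum_(k <- t) phi k)%:E <= \esum_(k in [set: Z]) (phi k)%:E)%E.
  move=> ut; apply: esum_ge; exists [set` t]; first by split; [exact: finite_seq|].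
  by rewrite -(fsbig_seq _ _ ut) sumEFin.
have e0 := ge [::] isT; move: fin ge e0.
case: (\esum_(k in _) _) => [r| |] // _ ge _; exists r => t ut.
by have := ge t ut; rewrite lee_fin.
Qed.

Section OrthogonalFamilies.
Variables (R : realType) (H : normedModType R) (ip : H -> H -> R).
Hypothesis Hip : is_inner_product ip.

Lemma ucauchy_orth (Z : eqType) (g : Z -> H) (M : R) :
  (forall j k, j != k -> ip (g j) (g k) = 0) ->
  (forall t, uniq t -> \sum_(k <- t) `|g k| ^+ 2 <= M) -> ucauchy g.
Proof.
move=> og bd e e0.
have [s0 [u0 H0]] := tail_nonneg (fun k => sqr_ge0 `|g k|) bd (mulr_gt0 e0 e0).
exists s0; split => // t ut dt.
have := H0 t ut dt; rewrite -(norm_orth_sum Hip) // -expr2 ltr_sqr ?nnegrE //.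
exact: ltW.
Qed.

Lemma usum_ip (Z : eqType) (f : Z -> H) l y :
  has_usum f l -> has_usum (fun k => ip (f k) y) (ip l y).
Proof.
move=> h e e0; have e1 : 0 < e / (`|y| + 1) by rewrite divr_gt0 // ltr_wpDl.
have [s0 H0] := h _ e1; exists s0 => s us sub.
rewrite -(ip_suml Hip) -(ipBl Hip); apply: le_lt_trans (cauchy_schwarz Hip _ _) _.
have := H0 s us sub; rewrite ltr_pdivlMr ?ltr_wpDl // => hs.
by apply: le_lt_trans _ hs; rewrite ler_wpM2l ?lerDl.
Qed.

Lemma bessel (Z : eqType) (h : Z -> H) (u : H) (t : seq Z) :
  (forall j k, j != k -> ip (h j) (h k) = 0) -> (forall k, h k != 0) -> uniq t ->
  \sum_(k <- t) ip u (h k) ^+ 2 / `|h k| ^+ 2 <= `|u| ^+ 2.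
Proof.
move=> ho hn ut; pose w := \sum_(k <- t) (ip u (h k) / `|h k| ^+ 2) *: h k.
have hk k : `|h k| != 0 by rewrite normr_eq0.
have uw : ip u w = \sum_(k <- t) ip u (h k) ^+ 2 / `|h k| ^+ 2.
  by rewrite (ip_sumr Hip); apply: eq_bigr => k _; rewrite (ipZr Hip) mulrAC expr2.
have ww : `|w| ^+ 2 = \sum_(k <- t) ip u (h k) ^+ 2 / `|h k| ^+ 2.
  rewrite (norm_orth_sum Hip) //; last first.
    by move=> j k jk; rewrite (ipZl Hip) (ipZr Hip) ho ?mulr0.
  apply: eq_bigr => k _; rewrite normrZ exprMn real_normK ?num_real //.
  by field; exact: hk.
have := sqr_ge0 `|u - w|; rewrite (normB2 Hip) uw ww; lra.
Qed.

End OrthogonalFamilies.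

Section Projections.
Variables (R : realType) (H : normedModType R) (ip : H -> H -> R).
Hypothesis Hip : is_inner_product ip.

Lemma proj_eq (C : set H) x p : C p ->
  (forall y, C y -> ip (x - p) (y - p) = 0) -> nearest_proj C x = p.
Proof.
move=> Cp o.
have np : is_nearest C x p.
  split => // y Cy; rewrite -ler_sqr ?nnegrE // (pythagoras Hip (o y Cy)).
  by rewrite lerDl sqr_ge0.
rewrite /nearest_proj; have [Cq /(_ p Cp)] := xgetI 0 np; set q := xget _ _.
rewrite -ler_sqr ?nnegrE // (pythagoras Hip (o q Cq)) gerDl => qp.
by apply/eqP; rewrite -subr_eq0 -normr_le0 -ler_sqr ?nnegrE // expr0n.
Qed.

(* The nearest point [a] of a linear subspace to [x] leaves a residual
   [x - a] orthogonal to the subspace (first-order optimality along [a + t y]). *)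
Lemma proj_orth (A : set H) x a : closed_subspace A -> is_nearest A x a ->
  forall y, A y -> ip (x - a) y = 0.
Proof.
case=> _ AD AZ _ [Aa na] y Ay.
set d := ip (x - a) y; set t := d / (`|y| ^+ 2 + 1).
have N1 : 0 < `|y| ^+ 2 + 1 by rewrite ltr_wpDl ?sqr_ge0.
have dt : d = t * (`|y| ^+ 2 + 1) by rewrite /t divfK // gt_eqF.
have := na _ (AD _ _ Aa (AZ t _ Ay)); rewrite -ler_sqr ?nnegrE //.
rewrite opprD addrA (normB2 Hip (x - a)) (ipZr Hip) normrZ exprMn -/d.
rewrite real_normK ?num_real // dt => le.
have -> : t = 0 by nra.
by rewrite mul0r.
Qed.

Lemma proj_ip_self (A : set H) x a : closed_subspace A -> is_nearest A x a ->
  ip a x = `|a| ^+ 2.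
Proof.
move=> HA na; have := proj_orth HA na na.1.
by rewrite (ipBl Hip) (ipC Hip x) (ipxx Hip); lra.
Qed.

Lemma proj_pythagoras (A : set H) x a : closed_subspace A -> is_nearest A x a ->
  `|x| ^+ 2 = `|a| ^+ 2 + `|x - a| ^+ 2.
Proof.
move=> HA na; have o : ip (x - a) (0 - a) = 0.
  by rewrite (ipBr Hip) (ip0r Hip) (proj_orth HA na na.1) subrr.
by have := pythagoras Hip o; rewrite subr0 sub0r normrN => ->; exact: addrC.
Qed.

(* [nearest_proj] is a choice of nearest point; a nonzero value certifies
   that a nearest point exists and was chosen. *)
Lemma nearest_projP (C : set H) x :
  nearest_proj C x != 0 -> is_nearest C x (nearest_proj C x).
Proof. by rewrite /nearest_proj; case: xgetP => // _; rewrite eqxx. Qed.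

End Projections.

Section SubspaceProjections.
Variables (R : realType) (H : normedModType R) (ip : H -> H -> R).
Hypothesis Hip : is_inner_product ip.
Variable A : set H.
Hypothesis HA : closed_subspace A.

Lemma proj_ratio_range w a : is_nearest A w a -> a != 0 -> w != 0 ->
  0 < `|a| ^+ 2 / `|w| ^+ 2 <= 1.
Proof.
move=> na a0 w0; have w2 : 0 < `|w| ^+ 2 by rewrite exprn_gt0 // normr_gt0.
rewrite divr_gt0 ?exprn_gt0 ?normr_gt0 //= ler_pdivrMr // mul1r.
by rewrite (proj_pythagoras Hip HA na) lerDl sqr_ge0.
Qed.

(* Projection of [u] in [A] onto the section [{v in A | <v,w> = sigma}]:
   move along [a = P_A w], the direction of [w] seen from inside [A]. *)
Lemma proj_hyperplane w a (sigma : R) u : is_nearest A w a -> a != 0 -> A u ->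
  nearest_proj [set v | A v /\ ip v w = sigma] u
  = u - ((ip u w - sigma) / `|a| ^+ 2) *: a.
Proof.
move=> na a0 Au; set r := u - _ *: a.
have Ar : A r := subspaceB HA Au (subspaceZ HA _ na.1).
have rw : ip r w = sigma.
  rewrite (ipBl Hip) (ipZl Hip) (proj_ip_self Hip HA na); field.
  by rewrite normr_eq0.
apply: (proj_eq Hip (conj Ar rw)) => y [Ay yw]; rewrite /r subKr (ipZl Hip).
have := proj_orth Hip HA na (subspaceB HA Ay Ar).
rewrite (ipBl Hip) (ipC Hip w) (ipBl Hip) yw rw subrr sub0r => /eqP.
by rewrite oppr_eq0 => /eqP ->; rewrite mulr0.
Qed.

Lemma proj_usum_subspace (Z : eqType) (g q : Z -> H) v G Q : A v ->
  (forall k, A (q k)) -> (forall k y, A y -> ip (g k - q k) y = 0) ->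
  has_usum g G -> has_usum q Q -> nearest_proj A (v - G) = v - Q.
Proof.
move=> Av Aq oq HG HQ; have AvQ := subspaceB HA Av (usum_closed HA Aq HQ).
apply: (proj_eq Hip AvQ) => y Ay; set z := y - _; have Az : A z := subspaceB HA Ay AvQ.
rewrite !(ipBl Hip) (_ : ip G z = ip Q z) ?subrr //.
apply: (usum_uniq (usum_ip Hip _ HG)); apply: usum_ext (usum_ip Hip _ HQ) => k.
by have := oq k _ Az; rewrite (ipBl Hip); lra.
Qed.

(* Same comparison for Cauchy-summability: by Pythagoras the finite sums of
   [q] are no longer than those of [g]. *)
Lemma ucauchy_proj_family (Z : eqType) (g q : Z -> H) :
  (forall k, A (q k)) -> (forall k y, A y -> ip (g k - q k) y = 0) ->
  ucauchy g -> ucauchy q.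
Proof.
move=> Aq oq; apply: ucauchy_le => t ut.
rewrite -ler_sqr ?nnegrE //.
have := pythagoras Hip (x := \sum_(k <- t) g k) (p := \sum_(k <- t) q k) (y := 0).
rewrite sub0r normrN subr0 => -> ; first by rewrite lerDr sqr_ge0.
rewrite -sumrB (ip_suml Hip) big1 // => k _; apply: oq.
by rewrite -scaleN1r; exact: (subspaceZ HA (-1) (subspace_sum HA t Aq)).
Qed.

End SubspaceProjections.

Section ConstraintSet.
Variables (R : realType) (H : normedModType R) (ip : H -> H -> R).
Hypothesis Hip : is_inner_product ip.
Variables (Z : eqType) (h : Z -> H) (s : Z -> R).
Hypothesis h_orth : forall j k, j != k -> ip (h j) (h k) = 0.
Hypothesis h_nz : forall k, h k != 0.

Definition residual (u : H) (k : Z) : H :=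
  ((ip u (h k) - s k) / `|h k| ^+ 2) *: h k.

(* Since the [h k] are orthogonal, subtracting all corrections at once
   projects [u] onto the intersection of the constraints. *)
Lemma proj_constraints u G : has_usum (residual u) G ->
  nearest_proj [set v | forall k, ip v (h k) = s k] u = u - G.
Proof.
move=> HG; have ipG j : ip G (h j) = ip u (h j) - s j.
  apply: (usum_uniq (usum_ip Hip _ HG)); apply: usum_ext (usum_delta j _) => k.
  rewrite (ipZl Hip); case: eqP => [->|/eqP kj]; last by rewrite h_orth ?mulr0.
  by rewrite (ipxx Hip) divfK // expf_neq0 // normr_eq0.
apply: (proj_eq Hip) => [j|y Cy]; first by rewrite (ipBl Hip) ipG subKr.
rewrite subKr; apply: (usum_uniq (usum_ip Hip _ HG)); apply: usum_ext (@usum0 _ _ Z) => k.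
by rewrite (ipZl Hip) (ipC Hip (h k) (_ - _)) (ipBl Hip) Cy (ipBl Hip) ipG subKr subrr mulr0.
Qed.

End ConstraintSet.

(* The corrections are Cauchy-summable: their squared norms are bounded by
   twice Bessel's sum for [u] plus twice the [l^2] sum of [s k / |h k|]. *)
Lemma ucauchy_residual (R : realType) (H : normedModType R) (ip : H -> H -> R)
  (Hip : is_inner_product ip) (Z : choiceType) (h : Z -> H) (s : Z -> R) :
  (forall j k, j != k -> ip (h j) (h k) = 0) -> (forall k, h k != 0) ->
  (\esum_(k in [set: Z]) ((s k / `|h k|) ^+ 2)%:E < +oo)%E ->
  forall u, ucauchy (residual ip h s u).
Proof.
move=> ho hn fin u; have [M hM] := esum_bound (fun k => sqr_ge0 (s k / `|h k|)) fin.
apply: (ucauchy_orth Hip (M := 2 * `|u| ^+ 2 + 2 * M)) => [j k jk|t ut].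
  by rewrite /residual (ipZl Hip) (ipZr Hip) ho ?mulr0.
apply: (@le_trans _ _ (\sum_(k <- t)
    (2 * (ip u (h k) ^+ 2 / `|h k| ^+ 2) + 2 * (s k / `|h k|) ^+ 2))).
  apply: ler_sum => k _; rewrite /residual normrZ exprMn real_normK ?num_real //.
  have hk0 : 0 < `|h k| by rewrite normr_gt0.
  move: (ip u (h k)) (s k) (`|h k|) hk0 => a b X X0.
  rewrite (_ : ((a - b) / X ^+ 2) ^+ 2 * X ^+ 2 = (a - b) ^+ 2 / X ^+ 2).
  rewrite (_ : _ + _ = (2 * a ^+ 2 + 2 * b ^+ 2) / X ^+ 2).
  - rewrite ler_pM2r ?invr_gt0 ?exprn_gt0 // -subr_ge0.
    by rewrite (_ : _ - _ = (a + b) ^+ 2) ?sqr_ge0 //; ring.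
  - by field; rewrite gt_eqF.
  - by field; rewrite gt_eqF.
by rewrite big_split /= -!mulr_sumr lerD ?ler_pM2l ?bessel ?hM.
Qed.

Unset Implicit Arguments.

Theorem mainTheorem4 (R : realType) (H : completeNormedModType R)
  (ip : H -> H -> R) (Hip : is_inner_product ip)
  (A : set H) (HA : closed_subspace A)
  (Z : countType) (h : Z -> H) (s : Z -> R)
  (h_orth : forall j k, j != k -> ip (h j) (h k) = 0)
  (h_nz : forall k, h k != 0)
  (Ah_nz : forall k, nearest_proj A (h k) != 0)
  (s_l2 : (\esum_(k in [set: Z]) ((s k / `|h k|) ^+ 2)%:E < +oo)%E) :
  let Cs := [set v : H | forall k, ip v (h k) = s k] in
  let P k := nearest_proj [set v | A v /\ ip v (h k) = s k] in
  let mu k := `|nearest_proj A (h k)| ^+ 2 / `|h k| ^+ 2 in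
  (forall k, 0 < mu k <= 1) /\
  (forall u, A u ->
     has_usum (fun k => mu k *: (P k u - u)) (nearest_proj A (nearest_proj Cs u) - u)).
Proof.
move=> Cs P mu; pose a k := nearest_proj A (h k).
have na k : is_nearest A (h k) (a k) := nearest_projP (Ah_nz k).
split=> [k|u Au]; first exact: (proj_ratio_range Hip HA (na k) (Ah_nz k) (h_nz k)).
pose lam k := (ip u (h k) - s k) / `|h k| ^+ 2.
have Aa k : A (lam k *: a k) := subspaceZ HA _ (na k).1.
have oa k y : A y -> ip (residual ip h s u k - lam k *: a k) y = 0.
  by move=> Ay; rewrite -scalerBr (ipZl Hip) (proj_orth Hip HA (na k) Ay) mulr0.
have cr := ucauchy_residual Hip h_orth h_nz s_l2 u.
have [G HG] := ucauchy_usum cr.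
have [Q HQ] := ucauchy_usum (ucauchy_proj_family Hip HA Aa oa cr).
rewrite (proj_constraints Hip h_orth h_nz HG) (proj_usum_subspace Hip HA Au Aa oa HG HQ).
rewrite addrAC subrr add0r -[- Q]scaleN1r; apply: usum_ext (usum_scale (-1) HQ) => k.
rewrite /P (proj_hyperplane Hip HA _ (na k) (Ah_nz k) Au) addrAC subrr add0r.
rewrite scaleN1r scalerN scalerA /mu /lam; congr (- (_ *: _)).
by rewrite /a; field; rewrite !normr_eq0 Ah_nz h_nz.
Qed.
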